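(* Every code $C\subseteq[5]^7$ with $|C|=14$ and minimum Hamming distance at least $6$ can be extended to such a code of size $15$: there exists $u\in[5]^7$ such that $C\cup\{u\}$ has $15$ elements and minimum Hamming distance at least $6$.
   Context: $[5]=\{0,1,2,3,4\}$. The Hamming distance between two words of $[5]^7$ is the number of coordinates in which they differ; the minimum distance of a code is the minimum Hamming distance between distinct codewords. *)

From mathcomp Require Import all_boot.
Set Implicit Arguments. Unset Strict Implicit. Unset Printing Implicit Defensive.

Definition word := {ffun 'I_7 -> 'I_5}.

Definition hamming (x y : word) : nat := #|[set i : 'I_7 | x i != y i]|.

Definition min_dist_ge (C : {set word}) (d : nat) : Prop :=
  forall x y, x \in C -> y \in C -> x != y -> d <= hamming x y.

From mathcomp Require Import all_boot.
From mathcomp Require Import zify.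

(* Proof by double counting the agreements inside the code.
   For a code C, let cnt C i a be the number of codewords carrying the symbol
   a in coordinate i, and load C x = \sum_i cnt C i (x i) the number of pairs
   (y, i) with y in C and y i = x i.  Summing the load over C gives
   \sum_i \sum_a (cnt C i a)^2.
   - Upper bound: two distinct codewords at distance >= 6 agree in at most one
     coordinate, so load C x <= 7 + 13 = 20 for x in C; the total is <= 280.
   - Lower bound: each column sums to 14 and m^2 + 6 >= 5 m on naturals, so
     each \sum_a (cnt C i a)^2 >= 5 * 14 - 30 = 40; the total is >= 280.
   Hence all inequalities are tight: every count lies in {2, 3} and every
   codeword has load 20.  A column of five counts in {2, 3} summing to 14 has
   a symbol of count 2; the word u choosing such symbols agrees with any x in
   C at most at the coordinates where cnt C i (x i) = 2, i.e. at most
   \sum_i (3 - cnt C i (x i)) = 21 - 20 = 1 times, so u is at distance >= 6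
   from every codeword (in particular u is not in C). *)

Definition agree (x y : word) : nat := \sum_i (x i == y i).

Lemma hamming_sum (x y : word) : hamming x y = \sum_i (x i != y i).
Proof.
rewrite /hamming -sum1_card big_mkcond /=.
by apply: eq_bigr => i _; rewrite inE; case: (x i != y i).
Qed.

Lemma agree_hamming (x y : word) : agree x y + hamming x y = 7.
Proof.
rewrite hamming_sum /agree -big_split /=.
rewrite (eq_bigr (fun _ => 1)); last by move=> i _; case: (x i == y i).
by rewrite sum_nat_const card_ord.
Qed.

Lemma agree_refl (x : word) : agree x x = 7.
Proof. by rewrite -(agree_hamming x x) hamming_sum big1 ?addn0 // => i; rewrite eqxx. Qed.

Lemma hamming_sym (x y : word) : hamming x y = hamming y x.
Proof. by rewrite !hamming_sum; apply: eq_bigr => i _; rewrite eq_sym. Qed.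

Lemma eq_of_leq_sum (I : finType) (P : pred I) (f g : I -> nat) :
  (forall k, P k -> f k <= g k) ->
  \sum_(k | P k) g k <= \sum_(k | P k) f k -> forall k, P k -> f k = g k.
Proof.
move=> le_fg le_sum k Pk.
have [_ sum_eq] := leqif_sum (fun i Pi => leqif_eq (le_fg i Pi)).
have : [forall (i | P i), f i == g i] by rewrite -sum_eq eqn_leq le_sum leq_sum.
by move/forall_inP/(_ k Pk)/eqP.
Qed.

(* The pointwise inequality behind the lower bound: (m - 2)(m - 3) >= 0,
   with equality exactly for m in {2, 3}. *)
Lemma five_le_sq_add6 (m : nat) : 5 * m <= m ^ 2 + 6.
Proof. by rewrite -mulnn; case: m => [|[|[|[|m]]]] //; nia. Qed.

Lemma five_eq_sq_add6 (m : nat) : 5 * m = m ^ 2 + 6 -> 2 <= m <= 3.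
Proof. by rewrite -mulnn; case: m => [|[|[|[|m]]]] //; nia. Qed.

Lemma sum_pred1_nat (b : 'I_5) (F : 'I_5 -> nat) : \sum_a (b == a) * F a = F b.
Proof.
rewrite (bigD1 b) //= eqxx mul1n big1 ?addn0 // => a.
by rewrite eq_sym => /negPf ->.
Qed.

Section ColumnCounts.

Variable C : {set word}.

Definition cnt (i : 'I_7) (a : 'I_5) : nat := \sum_(y in C) (y i == a).

Definition load (x : word) : nat := \sum_i cnt i (x i).

Lemma sum_cnt i : \sum_a cnt i a = #|C|.
Proof.
rewrite /cnt exchange_big /= -sum1_card; apply: eq_bigr => y _.
transitivity (\sum_a (y i == a) * 1); first by apply: eq_bigr => a _; rewrite muln1.
exact: (sum_pred1_nat (y i) (fun _ => 1)).
Qed.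

Lemma load_agree x : load x = \sum_(y in C) agree y x.
Proof. by rewrite /load /cnt exchange_big. Qed.

Lemma sum_load : \sum_(x in C) load x = \sum_i \sum_a cnt i a ^ 2.
Proof.
rewrite exchange_big /=; apply: eq_bigr => i _.
rewrite (eq_bigr (fun x : word => \sum_a (x i == a) * cnt i a)); last first.
  by move=> x _; rewrite sum_pred1_nat.
rewrite exchange_big /=; apply: eq_bigr => a _.
by rewrite -big_distrl -mulnn.
Qed.

Lemma sum_sq_cnt_lower i : 5 * #|C| <= \sum_a cnt i a ^ 2 + 30.
Proof.
rewrite -(sum_cnt i) big_distrr /=.
apply: (@leq_trans (\sum_(a < 5) (cnt i a ^ 2 + 6))).
  by apply: leq_sum => a _; apply: five_le_sq_add6.
by rewrite big_split /= sum_nat_const card_ord.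
Qed.

(* Upper bound on a load: in a code of minimum distance d, distinct
   codewords agree in at most 7 - d coordinates. *)
Lemma load_upper d x :
  min_dist_ge C d -> x \in C -> load x <= 7 + #|C|.-1 * (7 - d).
Proof.
move=> hd xC; rewrite load_agree (bigD1 x xC) /= agree_refl leq_add2l.
have -> : #|C|.-1 = \sum_(y in C | y != x) 1.
  by rewrite (cardD1 x) xC -sum1_card; apply: eq_bigl => y; rewrite !inE andbC.
rewrite big_distrl /=; apply: leq_sum => y /andP [yC yx].
by have := hd _ _ yC xC yx; have := agree_hamming y x; lia.
Qed.

End ColumnCounts.

Section Extremal.

Variable C : {set word}.
Hypothesis card_C : #|C| = 14.
Hypothesis dist_C : min_dist_ge C 6.

(* Both bounds of the double count equal 280, so they are attained:
   all column counts lie in {2, 3} and every codeword has load 20. *)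
Lemma double_count_tight :
  (forall i a, 2 <= cnt C i a <= 3) /\ (forall x, x \in C -> load C x = 20).
Proof.
have load_le x : x \in C -> load C x <= 20.
  by move=> xC; have := @load_upper C 6 x dist_C xC; rewrite card_C.
have col_ge i : 40 <= \sum_a cnt C i a ^ 2.
  by have := sum_sq_cnt_lower C i; rewrite card_C; lia.
have total_le : \sum_i \sum_a cnt C i a ^ 2 <= \sum_(i < 7) 40.
  rewrite -sum_load sum_nat_const card_ord.
  apply: (@leq_trans (\sum_(x in C) 20)); first exact: leq_sum.
  by rewrite sum_nat_const card_C.
have col_eq i : \sum_a cnt C i a ^ 2 = 40.
  symmetry; apply: (@eq_of_leq_sum _ xpredT (fun=> 40)
    (fun j => \sum_a cnt C j a ^ 2) _ total_le i isT) => k _.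
  exact: col_ge.
split=> [i a | x xC].
  have col_tight : \sum_a (cnt C i a ^ 2 + 6) <= \sum_a 5 * cnt C i a.
    by rewrite -big_distrr big_split /= sum_cnt card_C col_eq sum_nat_const card_ord.
  apply: five_eq_sq_add6; apply: (@eq_of_leq_sum _ xpredT (fun a => 5 * cnt C i a)
    (fun a => cnt C i a ^ 2 + 6) _ col_tight a isT) => k _.
  exact: five_le_sq_add6.
have loads_tight : \sum_(y in C) 20 <= \sum_(y in C) load C y.
  rewrite sum_load sum_nat_const card_C.
  apply: (@leq_trans (\sum_(i < 7) 40)); first by rewrite sum_nat_const card_ord.
  exact: leq_sum.
exact: (@eq_of_leq_sum _ (mem C) (load C) (fun=> 20) load_le loads_tight x xC).
Qed.

(* Five counts in {2, 3} summing to 14 cannot all be 3. *)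
Lemma cnt_two_exists i : exists a, cnt C i a = 2.
Proof.
have [cnt23 _] := double_count_tight.
have [a /eqP cnt2 | no2] := pickP (fun a => cnt C i a == 2); first by exists a.
have : \sum_a cnt C i a = \sum_(a < 5) 3.
  by apply: eq_bigr => a _; have := cnt23 i a; have := no2 a; lia.
by rewrite sum_cnt card_C sum_nat_const card_ord.
Qed.

Definition hole : word := [ffun i => odflt ord0 [pick a | cnt C i a == 2]].

Lemma cnt_hole i : cnt C i (hole i) = 2.
Proof.
rewrite ffunE; case: pickP => [a /eqP // | no2].
by have [a /eqP] := cnt_two_exists i; rewrite no2.
Qed.

Lemma agree_hole x : x \in C -> agree x hole <= 1.
Proof.
move=> xC; have [cnt23 load20] := double_count_tight.
have slack : \sum_i (3 - cnt C i (x i)) = 1.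
  have := load20 x xC; rewrite /load => load_x.
  apply/eqP; rewrite -(eqn_add2r 20) -{1}load_x -big_split /=.
  rewrite (eq_bigr (fun _ => 3)) ?sum_nat_const ?card_ord // => i _.
  by have := cnt23 i (x i); move: (cnt C i (x i)) => m; lia.
rewrite -slack; apply: leq_sum => i _.
by case: eqP => [-> | _] //; rewrite cnt_hole.
Qed.

Lemma hamming_hole x : x \in C -> 6 <= hamming x hole.
Proof. by move=> xC; have := agree_hole x xC; have := agree_hamming x hole; lia. Qed.

Lemma hole_notin : hole \notin C.
Proof. by apply/negP => /agree_hole; rewrite agree_refl. Qed.

End Extremal.

Theorem proposition5p7 (C : {set word}) :
  #|C| = 14 -> min_dist_ge C 6 ->
  exists u : word, #|u |: C| = 15 /\ min_dist_ge (u |: C) 6.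
Proof.
move=> card_C dist_C; exists (hole C); split.
  by rewrite cardsU1 (hole_notin C card_C dist_C) card_C.
move=> x y; rewrite !in_setU1 => /predU1P [-> | xC] /predU1P [-> | yC] nxy.
- by rewrite eqxx in nxy.
- by rewrite hamming_sym; apply: hamming_hole.
- exact: hamming_hole.
- exact: dist_C.
Qed.
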